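(* Let $r\ge 3$ and let $\mathcal{M}$ be a uniform oriented matroid of rank $r$ on $n$ elements. If $X,Y$ are cocircuits of $\mathcal{M}$ with $|X^0\setminus Y^0|=2$, then $d_{\mathcal{M}}(X,Y)\le n-r+1$.
   Context: Sign vectors: for a finite set $E$ and $X\in\{+,-,0\}^E$, write $X^+=\{e:X_e=+\}$, $X^-=\{e:X_e=-\}$, $X^0=\{e:X_e=0\}$, $\operatorname{supp}(X)=X^+\cup X^-$, and $-X$ for the componentwise negation. For sign vectors $X,Y$, the separating set is $S(X,Y)=(X^+\cap Y^-)\cup(X^-\cap Y^+)$, and the composition $X\circ Y$ is given by $(X\circ Y)_e=X_e$ if $X_e\neq 0$ and $(X\circ Y)_e=Y_e$ otherwise. An oriented matroid $\mathcal{M}=(E,\mathcal{C}^* )$ is a finite set $E$ together with a set $\mathcal{C}^*\subseteq\{+,-,0\}^E$ of (signed) cocircuits satisfying: (CC0) $\mathbf{0}\notin\mathcal{C}^*$; (CC1) $X\in\mathcal{C}^*\Rightarrow -X\in\mathcal{C}^*$; (CC2) if $X,Y\in\mathcal{C}^*$ and $\operatorname{supp}(X)\subseteq\operatorname{supp}(Y)$ then $X=\pm Y$; (CC3) if $X,Y\in\mathcal{C}^*$, $X\neq -Y$ and $e\in S(X,Y)$, then there is $Z\in\mathcal{C}^*$ with $Z^+\subseteq (X^+\cup Y^+)\setminus\{e\}$ and $Z^-\subseteq (X^-\cup Y^-)\setminus\{e\}$. The covectors of $\mathcal{M}$ are $\mathbf{0}$ together with all compositions $X^1\circ\cdots\circ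 X^k$ ($k\ge 1$) of cocircuits, partially ordered componentwise by $0<+$ and $0<-$ ($+,-$ incomparable). The rank $r$ of $\mathcal{M}$ is the largest $k$ such that there is a chain $\mathbf{0}=V_0<V_1<\cdots<V_k$ of covectors. $\mathcal{M}$ is uniform if $|X^0|=r-1$ for every cocircuit $X$. The cocircuit graph $G^*(\mathcal{M})$ has the cocircuits as vertices, with distinct cocircuits $X,Y$ adjacent iff $|X^0\cap Y^0|\ge r-2$ and $S(X,Y)=\emptyset$. $d_{\mathcal{M}}(X,Y)$ denotes graph distance in $G^*(\mathcal{M})$. *)

From mathcomp Require Import all_boot.
Set Implicit Arguments. Unset Strict Implicit. Unset Printing Implicit Defensive.

(* Signs: Some true = +, Some false = -, None = 0. *)
Definition sign := option bool.
Notation svec E := {ffun E -> sign}.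

Section SignVectors.
Variable E : finType.
Implicit Types X Y Z V W : svec E.

Definition sv0 : svec E := [ffun _ => None].
Definition svneg X : svec E := [ffun e => omap negb (X e)].
Definition svplus X : {set E} := [set e | X e == Some true].
Definition svminus X : {set E} := [set e | X e == Some false].
Definition svzero X : {set E} := [set e | X e == None].
Definition svsupp X : {set E} := svplus X :|: svminus X.
Definition svsep X Y : {set E} :=
  (svplus X :&: svminus Y) :|: (svminus X :&: svplus Y).
Definition svcomp X Y : svec E :=
  [ffun e => if X e is Some b then Some b else Y e].

(* Cocircuit axioms (CC0)-(CC3). *)
Definition is_om (C : {set svec E}) : Prop :=
  [/\ sv0 \notin C,
      (forall X, X \in C -> svneg X \in C),
      (forall X Y, X \in C -> Y \in C -> svsupp X \subset svsupp Y ->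
          X = Y \/ X = svneg Y) &
      (forall X Y e, X \in C -> Y \in C -> X <> svneg Y -> e \in svsep X Y ->
          exists2 Z, Z \in C &
            (svplus Z \subset (svplus X :|: svplus Y) :\ e) /\
            (svminus Z \subset (svminus X :|: svminus Y) :\ e))].

Definition covector (C : {set svec E}) V : Prop :=
  V = sv0 \/
  exists s : seq (svec E), [/\ s != [::], all (mem C) s & V = foldr svcomp sv0 s].

Definition svle V W : bool := [forall e, (V e == None) || (V e == W e)].
Definition svlt V W : bool := svle V W && (V != W).

Definition has_chain (C : {set svec E}) (k : nat) : Prop :=
  exists f : nat -> svec E,
    [/\ f 0 = sv0,
        (forall i, i <= k -> covector C (f i)) &
        (forall i, i < k -> svlt (f i) (f i.+1))].

Definition om_rank (C : {set svec E}) (r : nat) : Prop :=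
  has_chain C r /\ (forall k, has_chain C k -> k <= r).

Definition om_uniform (C : {set svec E}) (r : nat) : Prop :=
  forall X, X \in C -> #|svzero X| = r.-1.

Definition coadj (C : {set svec E}) (r : nat) : rel (svec E) :=
  fun X Y => [&& X \in C, Y \in C, X != Y,
                 r - 2 <= #|svzero X :&: svzero Y| & svsep X Y == set0].

(* d_M(X,Y) <= m : there is a walk of length at most m from X to Y in G*(M). *)
Definition codist_le (C : {set svec E}) (r : nat) X Y (m : nat) : Prop :=
  exists p : seq (svec E),
    [/\ size p <= m, path (coadj C r) X p & last X p = Y].
End SignVectors.

From mathcomp Require Import all_boot.
From mathcomp Require Import zify.
Set Implicit Arguments. Unset Strict Implicit. Unset Printing Implicit Defensive.

(* Write n = |E|, X^0 \ Y^0 = {a,b},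
   Y^0 \ X^0 = {c,d} and A = X^0 /\ Y^0, and let the detour of X -> W -> Y be
   |S(X,W)| + |S(W,Y)|.
   1. In a uniform oriented matroid of rank r every (r-1)-subset of E is the
      zero set of a cocircuit [every_set_hyperplane]: descend a maximal chain
      of covectors, propagating the property by hyperplane exchange.
   2. Repeated elimination along S(X,Z) joins non-opposite cocircuits sharing
      r-2 zeros by a walk of length |S(X,Z)| + 1 [codist_sep]; so a cocircuit
      W sharing r-2 zeros with X and with Y gives a walk of length
      detour + 2 [codist_through].
   3. Take U, V with zero sets {a,c} + A and {a,d} + A.  The detours through
      W and -W total at most 2(n - r), so for W = U, V either one of them is
      shorter than n - r or the detour through W is exactly n - r
      [short_or_tight].
   4. Eliminating b between U and +-V recovers +-X, which forces the sum of
      the detours through U and V to be odd [odd_detours]; hence they are not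
      both n - r, and the distance is at most n - r + 1. *)

Definition sign_opp (s t : sign) : bool :=
  if (s, t) is (Some x, Some y) then x != y else false.

Lemma sign_oppP (s t : sign) : sign_opp s t -> exists x, s = Some x /\ t = Some (~~ x).
Proof. by case: s => [[]|]; case: t => [[]|] //= _; eexists. Qed.

Lemma sign_opp_between (x w z : sign) :
  (forall s, w = Some s -> x = Some s \/ z = Some s) ->
  [/\ sign_opp x w -> sign_opp x z, sign_opp w z -> sign_opp x z
    & ~~ (sign_opp x w && sign_opp w z)].
Proof.
case: w => [s /(_ s erefl) [] -> | _]; last by split => //; case: x.
  by case: s; case: z => [[]|].
by case: s; case: x => [[]|].
Qed.

Lemma omap_negbK (s : sign) : omap negb (omap negb s) = s.
Proof. by case: s => [[]|]. Qed.

Lemma sign_oppC (x y : sign) : sign_opp x y = sign_opp y x.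
Proof. by case: x => [[]|]; case: y => [[]|]. Qed.

Lemma sign_opp0r (x : sign) : sign_opp x None = false.
Proof. by case: x. Qed.

Lemma sign_oppNr (x y : sign) : x != None -> y != None ->
  sign_opp x (omap negb y) = ~~ sign_opp x y.
Proof. by case: x => [[]|]; case: y => [[]|]. Qed.

Lemma odd_sign_opp_add (x w y : sign) : x != None -> w != None -> y != None ->
  odd (sign_opp x w + sign_opp w y) = sign_opp x y.
Proof. by case: x => [[]|]; case: w => [[]|]; case: y => [[]|]. Qed.

Section SignVectorFacts.
Variable E : finType.
Implicit Types X Y W : svec E.

Lemma in_svsep X Y e : (e \in svsep X Y) = sign_opp (X e) (Y e).
Proof. by rewrite !inE; case: (X e) => [[]|]; case: (Y e) => [[]|]. Qed.

Lemma in_svzero X e : (e \in svzero X) = (X e == None).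
Proof. by rewrite inE. Qed.

Lemma svnegE X e : svneg X e = omap negb (X e).
Proof. by rewrite ffunE. Qed.

Lemma svnegK X : svneg (svneg X) = X.
Proof. by apply/ffunP => e; rewrite !ffunE omap_negbK. Qed.

Lemma svzero_neg X : svzero (svneg X) = svzero X.
Proof. by apply/setP => e; rewrite !inE ffunE; case: (X e). Qed.

Lemma svsepC X Y : svsep X Y = svsep Y X.
Proof.
by apply/setP => e; rewrite !in_svsep; case: (X e) => [[]|]; case: (Y e) => [[]|].
Qed.

Lemma svsupp_zero X : svsupp X = ~: svzero X.
Proof. by apply/setP => e; rewrite !inE; case: (X e) => [[]|]. Qed.

Lemma card_svsep X Y : #|svsep X Y| = \sum_e sign_opp (X e) (Y e).
Proof.
rewrite -sum1_card big_mkcond /=; apply: eq_bigr => e _.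
by rewrite in_svsep; case: sign_opp.
Qed.

Lemma svneq_of_zero X Y : svzero X != svzero Y -> X <> Y /\ X <> svneg Y.
Proof. by move=> neq; split=> eqXY; move: neq; rewrite eqXY ?svzero_neg eqxx. Qed.

(* [W] and [-W] separate from [X] disjoint sets of elements, all outside
   both zero sets; this bounds the lengths of detours through [W] and [-W]. *)
Lemma sep_neg_bound X W :
  #|svsep X W| + #|svsep X (svneg W)| <= #|~: (svzero X :|: svzero W)|.
Proof.
rewrite -cardsUI.
have -> : svsep X W :&: svsep X (svneg W) = set0.
  apply/setP => e; rewrite in_setI !in_svsep svnegE in_set0.
  by case: (X e) => [[]|]; case: (W e) => [[]|].
rewrite cards0 addn0; apply: subset_leq_card; apply/subsetP => e.
by rewrite in_setU !in_svsep svnegE !inE; case: (X e) => [[]|]; case: (W e) => [[]|].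
Qed.

Lemma sep_pair_bound X W x :
  x \in svzero W -> x \notin svzero X ->
  #|svsep X W| + #|svsep X (svneg W)| <= #|E| - (#|svzero X|).+1.
Proof.
move=> xW xX; apply: leq_trans (sep_neg_bound X W) _.
have : #|x |: svzero X| <= #|svzero X :|: svzero W|.
  by apply: subset_leq_card; rewrite subUset sub1set inE xW orbT subsetUl.
have := cardsC (svzero X :|: svzero W); rewrite cardsU1 xX; lia.
Qed.

End SignVectorFacts.

Section Cocircuits.
Variables (E : finType) (C : {set svec E}).
Hypothesis om : is_om C.
Implicit Types X Y Z W : svec E.

Lemma svneg_in X : X \in C -> svneg X \in C.
Proof. by case: om => _ negC _ _; apply: negC. Qed.

(* (CC3) read coordinatewise: eliminating [e] between [X] and [Y] yields a
   cocircuit vanishing at [e] whose nonzero signs are all taken from [X] or [Y]. *)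
Lemma elim_at X Y e :
  X \in C -> Y \in C -> X <> svneg Y -> sign_opp (X e) (Y e) ->
  exists2 W, W \in C & W e = None /\
     (forall f s, W f = Some s -> X f = Some s \/ Y f = Some s).
Proof.
case: om => _ _ _ elim XC YC XnY oppe.
have [W WC [Wplus Wminus]] := elim X Y e XC YC XnY (etrans (in_svsep X Y e) oppe).
have inW f s : W f = Some s -> f != e /\ (X f = Some s \/ Y f = Some s).
  case: s => Wf; [move/subsetP: Wplus => /(_ f) | move/subsetP: Wminus => /(_ f)];
  by rewrite !inE Wf eqxx => /(_ isT) /andP [-> /orP [/eqP|/eqP]]; auto.
exists W => //; split => [|f s /inW [] //].
by case We: (W e) => [s|] //; have [] := inW e s We; rewrite eqxx.
Qed.

Lemma elim_zero X Y z :
  X \in C -> Y \in C -> svzero X != svzero Y -> X z != None -> Y z != None ->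
  exists2 W, W \in C & svzero X :&: svzero Y :|: [set z] \subset svzero W.
Proof.
move=> XC YC nXY Xz Yz; have [XnY XnnY] := svneq_of_zero nXY.
suff [Y' Y'C [XnY' oppz zY']] : exists2 Y', Y' \in C &
    [/\ X <> svneg Y', sign_opp (X z) (Y' z) & svzero Y' = svzero Y].
  have [W WC [Wz WXY]] := elim_at XC Y'C XnY' oppz.
  exists W => //; apply/subsetP => f; rewrite -zY' !inE.
  case/orP => [/andP [/eqP Xf /eqP Yf] | /eqP ->]; last by rewrite Wz.
  by case Wf: (W f) => [s|] //; have [] := WXY f s Wf; rewrite ?Xf ?Yf.
case oppz: (sign_opp (X z) (Y z)); first by exists Y.
exists (svneg Y); rewrite ?svneg_in ?svnegK ?svzero_neg //; split => //.
by move: Xz Yz oppz; rewrite svnegE; case: (X z) => [[]|]; case: (Y z) => [[]|].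
Qed.

(* (CC2) in terms of zero sets. *)
Lemma cocircuit_zero_sub X Z :
  X \in C -> Z \in C -> svzero X \subset svzero Z -> Z = X \/ Z = svneg X.
Proof. by case: om => _ _ supp _ XC ZC sub; apply: supp; rewrite // !svsupp_zero setCS. Qed.

Lemma covector_zero_cover V y :
  covector C V -> y \notin svzero V ->
  exists2 W, W \in C & svzero V \subset svzero W /\ y \notin svzero W.
Proof.
have zero_comp (s : seq (svec E)) e :
    (foldr (@svcomp E) (sv0 E) s e == None) = all (fun W => W e == None) s.
  by elim: s => [|W s IH] /=; rewrite ffunE //; case: (W e).
case=> [->|[s [_ sC ->]]]; first by rewrite inE ffunE.
rewrite inE zero_comp => /allPn [W Ws Wy]; exists W; first exact: (allP sC).
split; last by rewrite inE.
by apply/subsetP => e; rewrite !inE zero_comp => /allP /(_ W Ws).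
Qed.

(* Eliminating [b] between [U] and [V] recovers [X] up to sign when the zeros of
   [X] are [b] and common zeros of [U] and [V]; reading off the eliminant at a
   zero [c] of [U] and a zero [d] of [V] then ties the sign patterns of [X]
   against [V] at [c] and against [U] at [d]. *)
Lemma elim_sign_transfer X U V b c d :
  X \in C -> U \in C -> V \in C -> U <> svneg V -> sign_opp (U b) (V b) ->
  (forall f, X f = None -> f = b \/ (U f = None /\ V f = None)) ->
  U c = None -> V d = None -> X c != None -> X d != None ->
  sign_opp (X c) (V c) = sign_opp (X d) (U d).
Proof.
move=> XC UC VC UnV oppb Xzero Uc Vd Xc Xd.
have [Z ZC [Zb ZUV]] := elim_at UC VC UnV oppb.
have XZ : svzero X \subset svzero Z.
  apply/subsetP => f; rewrite !in_svzero => /eqP /Xzero [->|[Uf Vf]]; first by rewrite Zb.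
  by case Zf: (Z f) => [s|] //; case: (ZUV f s Zf); rewrite ?Uf ?Vf.
have ZX := cocircuit_zero_sub XC ZC XZ.
have Z_nonzero f : X f != None -> Z f != None.
  by rewrite -!in_svzero; case: ZX => ->; rewrite ?svzero_neg.
have Zc : Z c = V c.
  case Zc: (Z c) (Z_nonzero c Xc) => [s|] // _.
  by case: (ZUV c s Zc) => [/eqP|->]; rewrite ?Uc.
have Zd : Z d = U d.
  case Zd: (Z d) (Z_nonzero d Xd) => [s|] // _.
  by case: (ZUV d s Zd) => [->|/eqP]; rewrite ?Vd.
rewrite -Zc -Zd; case: ZX => ->; rewrite ?svnegE.
  by case: (X c) => [[]|]; case: (X d) => [[]|].
by case: (X c) Xc => [[]|]; case: (X d) Xd => [[]|].
Qed.

End Cocircuits.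

Definition hyperplane (E : finType) (C : {set svec E}) (T : {set E}) : Prop :=
  exists2 Z, Z \in C & svzero Z = T.

Lemma svlt_zero_proper (E : finType) (V W : svec E) :
  svlt V W -> svzero W \proper svzero V.
Proof.
case/andP => /forallP le neq; rewrite properE; apply/andP; split.
  apply/subsetP => e; rewrite !inE => /eqP We.
  by case/orP: (le e) => // /eqP ->; rewrite We.
apply/subsetPn; have [e neqe] : exists e, V e != W e.
  by apply/existsP; apply: contraNT neq; rewrite negb_exists => /forallP eqVW;
     apply/eqP/ffunP => e; apply/eqP; rewrite -[_ == _]negbK eqVW.
have Ve : V e = None by case/orP: (le e) => /eqP // Ve; rewrite Ve eqxx in neqe.
by exists e; rewrite !inE ?Ve // eq_sym -Ve.
Qed.

Lemma card_proper_chain (T : finType) (Z : nat -> {set T}) k :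
  (forall i, i < k -> Z i.+1 \proper Z i) ->
  forall i j, i <= j <= k -> #|Z j| + (j - i) <= #|Z i|.
Proof.
move=> Zproper i j /andP [ij jk]; elim: j ij jk => [|j IH] ij jk.
  by rewrite leqn0 in ij; rewrite (eqP ij) subnn addn0.
move: ij; rewrite leq_eqVlt => /orP [/eqP ->|ij']; first by rewrite subnn addn0.
have := proper_card (Zproper j jk); have := IH ij' (ltnW jk); lia.
Qed.

Section UniformHyperplanes.
Variables (E : finType) (C : {set svec E}) (r : nat).
Hypotheses (om : is_om C) (un : om_uniform C r).

Lemma hyperplane_card T : hyperplane C T -> #|T| = r.-1.
Proof. by move=> [Z ZC <-]; apply: un. Qed.

Lemma hyperplane_exchange H G p z :
  hyperplane C H -> hyperplane C G -> H != G -> p \in H ->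
  H :\ p \subset G -> z \notin H :\ p -> hyperplane C (z |: (H :\ p)).
Proof.
move=> [ZH ZHC ZH0] [ZG ZGC ZG0] HG pH HpG zHp.
have cT : #|z |: (H :\ p)| = r.-1.
  have := un ZHC; rewrite ZH0 (cardsD1 p H) pH cardsU1 zHp; lia.
have eq_hyp (T : {set E}) Z : Z \in C -> z |: (H :\ p) \subset T -> svzero Z = T ->
    hyperplane C (z |: (H :\ p)).
  move=> ZC sub ZT; exists Z => //; apply/eqP.
  by rewrite eq_sym eqEcard ZT sub -ZT (un ZC) cT leqnn.
case zH: (z \in H).
  have zp : z = p by apply/eqP; move: zHp; rewrite !inE zH andbT negbK.
  by apply: (eq_hyp H ZH ZHC _ ZH0); rewrite zp setD1K.
case zG: (z \in G).
  by apply: (eq_hyp G ZG ZGC _ ZG0); rewrite subUset sub1set zG.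
have [W WC sub] : exists2 W, W \in C & svzero ZH :&: svzero ZG :|: [set z] \subset svzero W.
  by apply: elim_zero; rewrite // -?in_svzero ?ZH0 ?ZG0 ?zH ?zG.
apply: (eq_hyp _ W WC _ erefl); apply: subset_trans sub.
rewrite ZH0 ZG0 (setUC (H :&: G)); apply: setUS; apply/subsetP => y yHp.
by rewrite inE (subsetP HpG _ yHp) andbT; case/setD1P: yHp.
Qed.

Definition ext_hyperplanes (S : {set E}) : Prop :=
  forall T : {set E}, #|T| = r.-1 -> S \subset T -> hyperplane C T.

Lemma ext_hyperplanes_self H : hyperplane C H -> ext_hyperplanes H.
Proof.
move=> hH T cT HT; suff -> : T = H by [].
by apply/eqP; rewrite eq_sym eqEcard HT cT (hyperplane_card hH) leqnn.
Qed.

(* If every hyperplane-sized superset of [x |: A] is a hyperplane and some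
   hyperplane contains [A] but not [x], the same holds for [A]: exchange the
   elements of [H :\: T] one at a time into [T :\: H]. *)
Lemma ext_hyperplanes_step A x H :
  ext_hyperplanes (x |: A) -> hyperplane C H -> A \subset H -> x \notin H ->
  ext_hyperplanes A.
Proof.
move=> extxA hH AH xH T cT AT; case: (boolP (x \in T)) => xT.
  by apply: extxA => //; apply/subUsetP; rewrite sub1set xT.
move: {2}#|H :\: T| (leqnn #|H :\: T|) => n; elim: n H hH AH xH => [|n IH] H hH AH xH.
  rewrite leqn0 cards_eq0 setD_eq0 => HT.
  by apply: (ext_hyperplanes_self hH).
case: (boolP (H \subset T)) => [HT _|/subsetPn [p pH pT] cHT].
  by apply: (ext_hyperplanes_self hH).
have cH := hyperplane_card hH.
have [z zT zH] : exists2 z, z \in T & z \notin H.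
  apply/subsetPn; apply: contra pT => TH.
  have TeqH : T = H by apply/eqP; rewrite eqEcard TH cH cT leqnn.
  by rewrite TeqH.
have pA : p \notin A by apply: contra pT; apply: (subsetP AT).
have AHp : A \subset H :\ p.
  by apply/subsetP => y yA; rewrite !inE (subsetP AH _ yA) andbT;
     apply: contraNneq pA => <-.
have hG : hyperplane C (x |: (H :\ p)).
  apply: extxA; last exact: setUS.
  by rewrite cardsU1 !inE negb_and xH orbT (cardsD1 p H) pH in cH *; lia.
have hH' : hyperplane C (z |: (H :\ p)).
  apply: (hyperplane_exchange hH hG) => //; last by rewrite !inE negb_and zH orbT.
  - by apply: contraNneq xH => ->; rewrite setU11.
  - exact: subsetUr.
apply: (IH _ hH'); first exact: subset_trans AHp (subsetUr _ _).
- by rewrite !inE negb_or negb_and xH orbT andbT; apply: contraNneq xT => ->.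
- have : (z |: (H :\ p)) :\: T \subset (H :\: T) :\ p.
    apply/subsetP => y; rewrite !inE => /andP [yT /orP [/eqP yz|/andP [-> ->]]].
      by rewrite yz zT in yT.
    by rewrite yT.
  move/subset_leq_card; move: cHT; rewrite (cardsD1 p (H :\: T)) !inE pT pH /=.
  lia.
Qed.

(* A maximal chain of covectors has zero sets [Z i] of size
   [r - i]; descending along it, [ext_hyperplanes_step] propagates the property
   from the hyperplane [Z 1] down to [Z r = set0]. *)
Lemma every_set_hyperplane :
  om_rank C r -> 0 < r -> forall T : {set E}, #|T| = r.-1 -> hyperplane C T.
Proof.
move=> [[f [_ fcov flt]] _] r_gt0.
pose Z i := svzero (f i).
have Zproper i : i < r -> Z i.+1 \proper Z i.
  by move=> ir; apply: svlt_zero_proper; apply: flt.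
have chain := card_proper_chain Zproper.
have [W1 W1C Z1W1] : exists2 W, W \in C & Z 1 \subset svzero W.
  move: (Zproper 0 r_gt0); rewrite properE => /andP [_ /subsetPn [y _ y1]].
  by have [W WC []] := covector_zero_cover (fcov 1 r_gt0) y1; exists W.
have cZ1 : #|Z 1| <= r.-1 by rewrite -(un W1C); apply: subset_leq_card.
have cZ i : 0 < i <= r -> #|Z i| = r - i.
  move=> /andP [i0 ir]; have := chain 1 i; have := chain i r; rewrite ir i0 leqnn /=.
  lia.
have ext i : 0 < i <= r -> ext_hyperplanes (Z i).
  elim: i => [//|[|i] IH] /andP [_ ir].
    apply: ext_hyperplanes_self; exists W1 => //; apply/eqP.
    by rewrite eq_sym eqEcard Z1W1 (un W1C) cZ ?r_gt0 // subn1 leqnn.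
  have [_ [x xi xi1]] := properP (Zproper i.+1 ir).
  have [W WC [sub xW]] := covector_zero_cover (fcov i.+2 ir) xi1.
  apply: (ext_hyperplanes_step _ (H := svzero W)) xW => //; last by exists W.
  have -> : x |: Z i.+2 = Z i.+1.
    apply/eqP; rewrite eqEcard cardsU1 xi1 !cZ ?ir ?(ltnW ir) //.
    rewrite subUset sub1set xi proper_sub ?Zproper //=; lia.
  by apply: IH; rewrite ltn0Sn (ltnW ir).
move=> T cT; apply: (ext r) => //; first by rewrite r_gt0 leqnn.
suff -> : Z r = set0 by apply: sub0set.
by apply/eqP; rewrite -cards_eq0 cZ ?r_gt0 ?leqnn ?subnn.
Qed.

End UniformHyperplanes.

(* Length bound of the walk from [X] to [Y] through [W] built by elimination,
   and its contribution from a single coordinate [e]. *)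
Definition detour (E : finType) (X W Y : svec E) : nat :=
  #|svsep X W| + #|svsep W Y|.

Definition detour_at (E : finType) (X W Y : svec E) (e : E) : nat :=
  sign_opp (X e) (W e) + sign_opp (W e) (Y e).

Lemma detour_sum (E : finType) (X W Y : svec E) :
  detour X W Y = \sum_e detour_at X W Y e.
Proof. by rewrite /detour !card_svsep -big_split. Qed.

Section Walks.
Variables (E : finType) (C : {set svec E}) (r : nat).
Implicit Types X Y Z : svec E.

Lemma codist_cat X Y Z m1 m2 :
  codist_le C r X Y m1 -> codist_le C r Y Z m2 -> codist_le C r X Z (m1 + m2).
Proof.
move=> [p1 [s1 h1 l1]] [p2 [s2 h2 l2]]; exists (p1 ++ p2); split.
- by rewrite size_cat leq_add.
- by rewrite cat_path h1 l1 h2.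
- by rewrite last_cat l1.
Qed.

Lemma codist_mono X Y m m' :
  m <= m' -> codist_le C r X Y m -> codist_le C r X Y m'.
Proof. by move=> mm' [p [s h l]]; exists p; split => //; apply: leq_trans mm'. Qed.

Lemma codist_adjacent X Z :
  X \in C -> Z \in C -> svsep X Z = set0 -> r - 2 <= #|svzero X :&: svzero Z| ->
  codist_le C r X Z 1.
Proof.
move=> XC ZC S0 cXZ; case: (eqVneq X Z) => [<-|XZ]; first by exists [::].
by exists [:: Z]; split => //=; rewrite andbT /coadj XC ZC XZ cXZ S0 eqxx.
Qed.

End Walks.

Section EliminationWalks.
Variables (E : finType) (C : {set svec E}) (r : nat).
Hypothesis om : is_om C.
Implicit Types X Y Z W : svec E.

Lemma elim_between X Z e :
  X \in C -> Z \in C -> X <> svneg Z -> e \in svsep X Z ->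
  exists2 W, W \in C &
    [/\ X <> svneg W, W <> svneg Z,
        #|svsep X W| + #|svsep W Z| < #|svsep X Z| &
        svzero X :&: svzero Z \subset svzero W].
Proof.
move=> XC ZC XnZ eS; have oppe : sign_opp (X e) (Z e) by rewrite -in_svsep.
have [W WC [We WXZ]] := elim_at om XC ZC XnZ oppe.
have [s [Xe Ze]] := sign_oppP oppe.
have S1 : svsep X W \subset svsep X Z :\ e.
  apply/subsetP => f; rewrite in_setD1 !in_svsep => oppXW.
  have [-> // _ _] := sign_opp_between (WXZ f); rewrite andbT.
  by apply: contraTneq oppXW => ->; rewrite We; case: (X e).
have S2 : svsep W Z \subset svsep X Z :\ e.
  apply/subsetP => f; rewrite in_setD1 !in_svsep => oppWZ.
  have [_ -> // _] := sign_opp_between (WXZ f); rewrite andbT.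
  by apply: contraTneq oppWZ => ->; rewrite We.
have disj : svsep X W :&: svsep W Z = set0.
  apply/setP => f; rewrite in_setI !in_svsep in_set0.
  by have [_ _ /negbTE] := sign_opp_between (WXZ f).
exists W => //; split.
- by move=> XnW; move: Xe; rewrite XnW svnegE We.
- by move=> WnZ; move: Ze; rewrite -[Z]svnegK -WnZ svnegE We.
- have := subset_leq_card (introT subUsetP (conj S1 S2)).
  rewrite cardsU disj cards0 subn0 (cardsD1 e (svsep X Z)) eS; lia.
- apply/subsetP => f; rewrite !inE => /andP [/eqP Xf /eqP Zf].
  by case Wf: (W f) => [y|] //; case: (WXZ f _ Wf); rewrite ?Xf ?Zf.
Qed.

(* Two cocircuits that are not opposite and share [r - 2] zeros are joined by
   a walk of length at most [|S(X,Z)| + 1]: eliminate along [S(X,Z)]. *)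
Lemma codist_sep X Z :
  X \in C -> Z \in C -> X <> svneg Z -> r - 2 <= #|svzero X :&: svzero Z| ->
  codist_le C r X Z (#|svsep X Z| + 1).
Proof.
move: {2}#|svsep X Z| (leqnn #|svsep X Z|) => n.
elim: n X Z => [|n IH] X Z cS XC ZC XnZ cXZ;
  (case: (set_0Vmem (svsep X Z)) => [S0|[e eS]];
   first by rewrite S0 cards0; apply: codist_adjacent).
  by rewrite (cardsD1 e) eS in cS.
have [W WC [XnW WnZ cW common]] := elim_between XC ZC XnZ eS.
have sub_common (P : {set E}) : svzero X :&: svzero Z \subset P ->
    r - 2 <= #|P|.
  by move=> sub; apply: leq_trans cXZ (subset_leq_card sub).
have walkXW : codist_le C r X W (#|svsep X W| + 1).
  apply: IH => //; first lia.
  by apply: sub_common; rewrite subsetI subsetIl.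
have walkWZ : codist_le C r W Z (#|svsep W Z| + 1).
  apply: IH => //; first lia.
  by apply: sub_common; rewrite subsetI common subsetIr.
apply: codist_mono (codist_cat walkXW walkWZ); lia.
Qed.

Lemma codist_through X W Y :
  X \in C -> W \in C -> Y \in C ->
  svzero X != svzero W -> svzero W != svzero Y ->
  r - 2 <= #|svzero X :&: svzero W| -> r - 2 <= #|svzero W :&: svzero Y| ->
  codist_le C r X Y (detour X W Y + 2).
Proof.
move=> XC WC YC nXW nWY cXW cWY.
have [_ XnW] := svneq_of_zero nXW; have [_ WnY] := svneq_of_zero nWY.
apply: codist_mono (codist_cat (codist_sep XC WC XnW cXW) (codist_sep WC YC WnY cWY)).
by rewrite /detour addnACA.
Qed.

(* In a uniform oriented matroid, a cocircuit [W] that is a legitimate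
   intermediate stop gives a short walk, unless the detours through [W] and
   [-W] both have the maximal length [|E| - r] allowed by [sep_pair_bound]. *)
Lemma short_or_tight X W Y x y :
  om_uniform C r -> 0 < r -> X \in C -> W \in C -> Y \in C ->
  x \in svzero W -> x \notin svzero X -> y \in svzero W -> y \notin svzero Y ->
  r - 2 <= #|svzero X :&: svzero W| -> r - 2 <= #|svzero W :&: svzero Y| ->
  codist_le C r X Y (#|E| - r + 1) \/ detour X W Y = #|E| - r.
Proof.
move=> un r_gt0 XC WC YC xW xX yW yY cXW cWY.
have short W' : W' \in C -> svzero W' = svzero W -> detour X W' Y < #|E| - r ->
    codist_le C r X Y (#|E| - r + 1).
  move=> W'C zW' lt; apply: codist_mono (codist_through XC W'C YC _ _ _ _); rewrite ?zW' //.
  - by move: lt; lia.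
  - by apply: contraNneq xX => ->.
  - by apply: contraNneq yY => <-.
have cX : (#|svzero X|).+1 = r by rewrite (un X XC) prednK.
have cY : (#|svzero Y|).+1 = r by rewrite (un Y YC) prednK.
have boundX := sep_pair_bound xW xX; have boundY := sep_pair_bound yW yY.
rewrite cX in boundX; rewrite cY !(svsepC Y) in boundY.
case: (ltnP (detour X W Y) (#|E| - r)) => [lt|geW]; first by left; apply: short lt.
case: (ltnP (detour X (svneg W) Y) (#|E| - r)) => [lt|geNW].
  by left; apply: (short _ (svneg_in om WC) (svzero_neg W) lt).
by right; move: geW geNW; rewrite /detour; lia.
Qed.

End EliminationWalks.

Lemma two_swap_decomposition (T : finType) (P Q : {set T}) :
  #|P| = #|Q| -> #|P :\: Q| = 2 ->
  exists a b c d,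
    [/\ P = [set a; b] :|: (P :&: Q), Q = [set c; d] :|: (P :&: Q),
        uniq [:: a; b; c; d] & [disjoint [set a; b; c; d] & P :&: Q]].
Proof.
move=> cPQ cPmQ.
have cQmP : #|Q :\: P| = 2.
  by have := cardsID Q P; have := cardsID P Q; rewrite setIC; lia.
have [a [b [ab eab]]] : exists a b, a != b /\ P :\: Q = [set a; b].
  by apply/cards2P; rewrite cPmQ.
have [c [d [cd ecd]]] : exists c d, c != d /\ Q :\: P = [set c; d].
  by apply/cards2P; rewrite cQmP.
have inab e : e \in [set a; b] -> (e \in P) && (e \notin Q) by rewrite -eab inE andbC.
have incd e : e \in [set c; d] -> (e \in Q) && (e \notin P) by rewrite -ecd inE andbC.
have neq x y : x \in [set a; b] -> y \in [set c; d] -> x != y.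
  by move=> /inab /andP [_ xQ] /incd /andP [yQ _]; apply: contraNneq xQ => ->.
exists a, b, c, d; split.
- by rewrite -eab setUC setID.
- by rewrite -ecd setIC setUC setID.
- rewrite /= !inE !negb_or ab cd !neq ?inE ?eqxx ?orbT //.
- rewrite disjoints_subset; apply/subsetP => e eabcd; rewrite !inE negb_and.
  have : (e \in [set a; b]) || (e \in [set c; d]) by move: eabcd; rewrite !inE -!orbA.
  by case/orP => [/inab|/incd] /andP [-> ->]; rewrite ?orbT.
Qed.

Lemma odd_sum_support (T : finType) (K : seq T) (F : T -> nat) :
  uniq K -> (forall e, e \notin K -> ~~ odd (F e)) ->
  odd (\sum_e F e) = odd (\sum_(e <- K) F e).
Proof.
move=> Kuniq even_out; rewrite (bigID (fun e => e \in K)) /= oddD big_uniq //.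
have /negbTE -> // : ~~ odd (\sum_(e | e \notin K) F e); last by rewrite addbF.
by rewrite -dvdn2; apply: dvdn_sum => e /even_out; rewrite dvdn2.
Qed.

Section TwoChanges.
Variables (E : finType) (C : {set svec E}) (r : nat).
Hypotheses (om : is_om C) (un : om_uniform C r).
Variables (X Y : svec E) (a b c d : E) (A : {set E}).
Hypotheses (XC : X \in C) (YC : Y \in C).
Hypotheses (zX : svzero X = [set a; b] :|: A) (zY : svzero Y = [set c; d] :|: A).
Hypotheses (distinct : uniq [:: a; b; c; d]) (hA : [disjoint [set a; b; c; d] & A]).

Let frameE :
  ((a == b) = false) * ((a == c) = false) * ((a == d) = false) *
  ((b == a) = false) * ((b == c) = false) * ((b == d) = false) *
  ((c == a) = false) * ((c == b) = false) * ((c == d) = false) *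
  ((d == a) = false) * ((d == b) = false) * ((d == c) = false) *
  ((a \in A) = false) * ((b \in A) = false) * ((c \in A) = false) * ((d \in A) = false).
Proof.
have notA e : e \in [set a; b; c; d] -> (e \in A) = false by apply: disjointFr.
move: distinct => /=; rewrite !inE !negb_or -!andbA.
case/and5P => ab ac ad bc /and3P [bd cd _].
by do !split; rewrite ?notA ?inE ?eqxx ?orbT //; apply/negbTE; by [|rewrite eq_sym].
Qed.

(* Off [b], [c], [d], the four vectors vanish together except that [Y] may
   not, or are all nonzero; either way the coordinate contributes an even
   amount to the two detours. *)
Lemma even_detours_off U V :
  svzero U = [set a; c] :|: A -> svzero V = [set a; d] :|: A ->
  forall e, e \notin [:: b; c; d] -> ~~ odd (detour_at X U Y e + detour_at X V Y e).
Proof.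
move=> zU zV e; rewrite !inE !negb_or => /and3P [eb ec ed].
have zeroes : [/\ (X e == None) = (e == a) || (e \in A),
                  (U e == None) = (e == a) || (e \in A),
                  (V e == None) = (e == a) || (e \in A) &
                  (Y e == None) = (e \in A)].
  by rewrite -!in_svzero zX zU zV zY !inE (negbTE eb) (negbTE ec) (negbTE ed) /= ?orbF.
rewrite /detour_at; case: (boolP ((e == a) || (e \in A))) => [z|nz].
  by case: zeroes; rewrite z => /eqP -> /eqP -> /eqP -> _; rewrite !sign_opp0r.
have eA : e \notin A by apply: contra nz => ->; rewrite orbT.
case: zeroes; rewrite (negbTE nz) (negbTE eA) => /negbT Xe /negbT Ue /negbT Ve /negbT Ye.
by rewrite oddD !odd_sign_opp_add ?addbb.
Qed.

(* The parity argument: only [b], [c], [d] matter, and the elimination of [b]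
   between [U] and [V] (or [-V]) makes their total contribution odd. *)
Lemma odd_detours U V : U \in C -> V \in C ->
  svzero U = [set a; c] :|: A -> svzero V = [set a; d] :|: A ->
  odd (detour X U Y + detour X V Y).
Proof.
move=> UC VC zU zV.
have Xb : X b = None by apply/eqP; rewrite -in_svzero zX !inE eqxx orbT.
have [Uc Yc] : U c = None /\ Y c = None.
  by split; apply/eqP; rewrite -in_svzero ?zU ?zY !inE eqxx ?orbT.
have [Vd Yd] : V d = None /\ Y d = None.
  by split; apply/eqP; rewrite -in_svzero ?zV ?zY !inE eqxx ?orbT.
have [Ub Vb Yb] : [/\ U b != None, V b != None & Y b != None].
  by rewrite -!in_svzero zU zV zY !inE !frameE.
have [Xc Vc Xd Ud] : [/\ X c != None, V c != None, X d != None & U d != None].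
  by rewrite -!in_svzero zX zV zU !inE !frameE.
have Xzero f : X f = None -> f = b \/ (U f = None /\ V f = None).
  move=> Xf; case: (eqVneq f b) => [->|fb]; [by left | right].
  have : (f == a) || (f \in A) by move/eqP: Xf; rewrite -in_svzero zX !inE (negbTE fb) orbF.
  by case/orP => z; split; apply/eqP; rewrite -in_svzero ?zU ?zV !inE z ?orbT.
have [UV UnV] : U <> V /\ U <> svneg V.
  by apply: svneq_of_zero; apply: contraNneq Vc => eqUV; rewrite -in_svzero -eqUV in_svzero Uc.
rewrite !detour_sum -big_split (odd_sum_support _ (even_detours_off zU zV)) /=;
  last by rewrite !inE !frameE.
rewrite !big_cons big_nil addn0 /detour_at Xb Uc Yc Vd Yd !sign_opp0r /= !add0n !addn0.
rewrite oddD (sign_oppC (V b)) odd_sign_opp_add // oddD !oddb.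
case oppb: (sign_opp (U b) (V b)).
  by rewrite (elim_sign_transfer om XC UC VC UnV oppb Xzero Uc Vd Xc Xd) addbb.
have oppNb : sign_opp (U b) (svneg V b) by rewrite svnegE sign_oppNr // oppb.
have UnNN : U <> svneg (svneg V) by rewrite svnegK.
have XzeroN f : X f = None -> f = b \/ (U f = None /\ svneg V f = None).
  by move/Xzero => [->|[Uf Vf]]; [left | right; rewrite svnegE Vf].
have VNd : svneg V d = None by rewrite svnegE Vd.
have := elim_sign_transfer om XC UC (svneg_in om VC) UnNN oppNb XzeroN Uc VNd Xc Xd.
by rewrite svnegE sign_oppNr // => <-; case: sign_opp.
Qed.

Let card_frame x y :
  x != y -> x \notin A -> y \notin A -> #|[set x; y] :|: A| = #|A| + 2.
Proof. by move=> xy xA yA; rewrite -setUA !cardsU1 in_setU1 negb_or xy xA yA /= !add1n addn2. Qed.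

Let frame_sub x y z : x \in [set y; z] -> x |: A \subset [set y; z] :|: A.
Proof. by move=> xyz; rewrite subUset sub1set in_setU xyz subsetUr. Qed.

Lemma codist_two_changes : om_rank C r -> codist_le C r X Y (#|E| - r + 1).
Proof.
move=> rank.
have cA : #|A| + 2 = r.-1 by rewrite -(un XC) zX card_frame ?frameE.
have r_gt0 : 0 < r by move: cA; lia.
have [U UC zU] : hyperplane C ([set a; c] :|: A).
  by apply: (every_set_hyperplane om un rank r_gt0); rewrite card_frame ?frameE.
have [V VC zV] : hyperplane C ([set a; d] :|: A).
  by apply: (every_set_hyperplane om un rank r_gt0); rewrite card_frame ?frameE.
have common e (P Q : {set E}) : e \notin A -> e |: A \subset P -> e |: A \subset Q ->
    r - 2 <= #|P :&: Q|.
  move=> eA eP eQ; have : e |: A \subset P :&: Q by rewrite subsetI eP eQ.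
  by move/subset_leq_card; rewrite cardsU1 eA; lia.
have aA : a \notin A by rewrite frameE.
have aY : a \notin svzero Y by rewrite zY !inE !frameE.
have aX : a |: A \subset svzero X by rewrite zX frame_sub // !inE eqxx.
have stop W z : W \in C -> svzero W = [set a; z] :|: A -> z \in [set c; d] ->
    codist_le C r X Y (#|E| - r + 1) \/ detour X W Y = #|E| - r.
  move=> WC zW zcd.
  have [zA zX'] : z \notin A /\ z \notin svzero X.
    by move: zcd; rewrite zX !inE => /orP [] /eqP ->; rewrite !frameE.
  have [aW zW'] : a |: A \subset svzero W /\ z |: A \subset svzero W.
    by rewrite zW !frame_sub // !inE eqxx ?orbT.
  apply: (short_or_tight om un r_gt0 XC WC YC _ zX' _ aY).
  - by apply: (subsetP zW'); rewrite setU11.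
  - by apply: (subsetP aW); rewrite setU11.
  - exact: common aA aX aW.
  - by apply: common zA zW' _; rewrite zY frame_sub.
have [//|tightU] := stop U c UC zU (set21 c d).
have [//|tightV] := stop V d VC zV (set22 c d).
by have := odd_detours UC VC zU zV; rewrite tightU tightV addnn odd_double.
Qed.

End TwoChanges.

Theorem corollary4p3 (E : finType) (C : {set {ffun E -> option bool}}) (r : nat)
    (X Y : {ffun E -> option bool}) :
  is_om C -> om_rank C r -> om_uniform C r -> 3 <= r ->
  X \in C -> Y \in C -> #|svzero X :\: svzero Y| = 2 ->
  codist_le C r X Y (#|E| - r + 1).
Proof.
move=> om rank un _ XC YC two.
have cXY : #|svzero X| = #|svzero Y| by rewrite (un X XC) (un Y YC).
have [a [b [c [d [zX zY distinct disj]]]]] := two_swap_decomposition cXY two.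
exact: (codist_two_changes om un XC YC zX zY distinct disj rank).
Qed.
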